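(* Let $(B,D,d,\theta)$, $(B',D',d',\theta')$ be E-systems and let $(F,\breve F,\widetilde F):\mathcal A_{B\to D}\to\mathcal A_{B'\to D'}$ be a single Ann-functor. Define $f_0:D\to D'$ by $f_0(x)=F(x)$ and $f_1:B\to B'$ by $f_1(b)=F(b)$, where $b$ is regarded as the morphism $0\xrightarrow{b}d(b)$ and $F(b)\in B'$ is the element labelling its image. Then $(f_1,f_0)$ is a morphism of E-systems $(B,D,d,\theta)\to(B',D',d',\theta')$.
   Context: E-system $(B,D,d,\theta)$: $B$ a ring, $D$ a unital ring, $d:B\to D$, $\theta:D\to M_B$ ring homomorphisms ($M_B$ ring of bimultiplications of $B$), $\theta(d(b))=\mu_b$ (inner bimultiplication), $d(\theta_xb)=x\,d(b)$, $d(b\theta_x)=d(b)x$. Morphism of E-systems: ring homomorphisms $f_1:B\to B'$, $f_0:D\to D'$ with $f_0d=d'f_1$, $f_1(\theta_xb)=\theta'_{f_0(x)}f_1(b)$, $f_1(b\theta_x)=f_1(b)\theta'_{f_0(x)}$. Associated strict Ann-category $\mathcal A_{B\to D}$: objects the elements of $D$; morphisms $x\to y$ are $b\in B$ with $y=d(b)+x$; composition is addition in $B$; $\oplus,\otimes$ on objects are $+,\cdot$ of $D$; on morphisms $(x\xrightarrow{b}y)\oplus(x'\xrightarrow{b'}y')=(x+x'\xrightarrow{b+b'}y+y')$, $(x\xrightarrow{b}y)\otimes(x'\xrightarrow{b'}y')=(xx'\xrightarrow{bb'+b\theta_{x'}+\theta_xb'}yy')$; all constraints identities. An Ann-functor $(F,\breve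 F,\widetilde F)$ is a functor with natural isomorphisms $\breve F_{X,Y}:F(X\oplus Y)\to FX\oplus FY$, $\widetilde F_{X,Y}:F(X\otimes Y)\to FX\otimes FY$, $F_*:F(1)\to1'$ making $F$ symmetric monoidal for $\oplus$, monoidal for $\otimes$, and compatible with the distributivity constraints. An Ann-functor between associated Ann-categories is single if $F(0)=0'$, $F(1)=1'$ and $\breve F_{x,y}$, $\widetilde F_{x,y}$ are constant (the same element of $B'$ for all $x,y$). *)

From HB Require Import structures.
From mathcomp Require Import all_boot all_order all_algebra.
Set Implicit Arguments. Unset Strict Implicit. Unset Printing Implicit Defensive.
Import GRing.Theory.
Local Open Scope ring_scope.

Definition is_rng (B : zmodType) (m : B -> B -> B) : Prop :=
  [/\ forall a b c, m a (m b c) = m (m a b) c,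
      forall a b c, m (a + b) c = m a c + m b c &
      forall a b c, m a (b + c) = m a b + m a c].

Section Esys.
Variables (B : zmodType) (m : B -> B -> B) (D : pzRingType) (d : B -> D).
(* theta is given by its two components:
     thl x b = theta_x b   (left action),
     thr x b = b theta_x   (right action). *)
Variables (thl thr : D -> B -> B).

(* (sl, sr) is a bimultiplication of B: sl b = sigma b, sr b = b sigma. *)
Definition is_bimult (sl sr : B -> B) : Prop :=
  [/\ forall b c, sl (b + c) = sl b + sl c,
      forall b c, sr (b + c) = sr b + sr c,
      forall b c, sl (m b c) = m (sl b) c,
      forall b c, sr (m b c) = m b (sr c) &
      forall b c, m (sr b) c = m b (sl c)].

(* theta : D -> M_B is a (unital) ring homomorphism into the ring of
   bimultiplications, where (sigma tau) b = sigma (tau b) and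
   b (sigma tau) = (b sigma) tau. *)
Definition theta_ringhom : Prop :=
  [/\ forall x, is_bimult (thl x) (thr x),
      (forall x y b, thl (x + y) b = thl x b + thl y b) /\
      (forall x y b, thr (x + y) b = thr x b + thr y b),
      forall x y b, thl (x * y) b = thl x (thl y b),
      forall x y b, thr (x * y) b = thr y (thr x b) &
      forall b, thl 1 b = b /\ thr 1 b = b].

Definition is_Esystem : Prop :=
  [/\ is_rng m,
      (forall b c, d (b + c) = d b + d c) /\ (forall b c, d (m b c) = d b * d c),
      theta_ringhom,
      (forall b c, thl (d b) c = m b c /\ thr (d b) c = m c b) &
      (forall x b, d (thl x b) = x * d b /\ d (thr x b) = d b * x)].

(* Label of the tensor product (x --b--> _) (x) (y --c--> _) in A_{B->D}. *)
Definition tens (x : D) (b : B) (y : D) (c : B) : B :=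
  m b c + thr y b + thl x c.
End Esys.

Section Morph.
Variables (B : zmodType) (m : B -> B -> B) (D : pzRingType) (d : B -> D)
          (thl thr : D -> B -> B).
Variables (B' : zmodType) (m' : B' -> B' -> B') (D' : pzRingType) (d' : B' -> D')
          (thl' thr' : D' -> B' -> B').

Definition is_Emorph (f1 : B -> B') (f0 : D -> D') : Prop :=
  [/\ (forall b c, f1 (b + c) = f1 b + f1 c) /\ (forall b c, f1 (m b c) = m' (f1 b) (f1 c)),
      [/\ forall x y, f0 (x + y) = f0 x + f0 y,
          forall x y, f0 (x * y) = f0 x * f0 y & f0 1 = 1],
      forall b, f0 (d b) = d' (f1 b),
      forall x b, f1 (thl x b) = thl' (f0 x) (f1 b) &
      forall x b, f1 (thr x b) = thr' (f0 x) (f1 b)].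

(* A morphism of A_{B->D} is determined by its source x and
   its label b (target d b + x); composition adds labels, identities have
   label 0, and all constraints are identities (label 0).
   Data:  Fo x    = F(x) on objects,
          Fm x b  = label of F(x --b--> d b + x),
          Fb x y  = label of breve F_{x,y} : F(x+y) -> Fx + Fy,
          Ft x y  = label of tilde F_{x,y} : F(xy) -> Fx Fy,
          F0      = label of the unit iso F(0) -> 0',
          Fs      = label of F_* : F(1) -> 1'. *)
Definition is_AnnFunctor (Fo : D -> D') (Fm : D -> B -> B')
  (Fb Ft : D -> D -> B') : Prop :=
  let tens' := tens m' thl' thr' in
  [/\ (* F is a functor *)
      [/\ forall x b, Fo (d b + x) = d' (Fm x b) + Fo x,
          forall x, Fm x 0 = 0 &
          forall x b c, Fm x (c + b) = Fm (d b + x) c + Fm x b],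
      (* breve F : natural iso, symmetric monoidal structure for (+) *)
      [/\ forall x y, Fo x + Fo y = d' (Fb x y) + Fo (x + y),
          forall x y b c, Fb (d b + x) (d c + y) + Fm (x + y) (b + c)
                          = (Fm x b + Fm y c) + Fb x y,
          forall x y z, 0 + (0 + Fb y z) + Fb x (y + z)
                        = (Fb x y + 0) + Fb (x + y) z + Fm (x + (y + z)) 0,
          forall x y, Fb y x + Fm (x + y) 0 = 0 + Fb x y &
          exists F0 : B', 0 = d' F0 + Fo 0 /\
             forall x, 0 + (F0 + 0) + Fb 0 x = Fm (0 + x) 0 /\
                       0 + (0 + F0) + Fb x 0 = Fm (x + 0) 0],
      (* tilde F : natural iso, monoidal structure for (x) *)
      [/\ forall x y, Fo x * Fo y = d' (Ft x y) + Fo (x * y),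
          forall x y b c,
            Ft (d b + x) (d c + y) + Fm (x * y) (tens m thl thr x b y c)
            = tens' (Fo x) (Fm x b) (Fo y) (Fm y c) + Ft x y,
          forall x y z,
            0 + tens' (Fo x) 0 (Fo (y * z)) (Ft y z) + Ft x (y * z)
            = tens' (Fo (x * y)) (Ft x y) (Fo z) 0 + Ft (x * y) z
              + Fm (x * (y * z)) 0 &
          exists Fs : B', 1 = d' Fs + Fo 1 /\
             forall x, 0 + tens' (Fo 1) Fs (Fo x) 0 + Ft 1 x = Fm (1 * x) 0 /\
                       0 + tens' (Fo x) 0 (Fo 1) Fs + Ft x 1 = Fm (x * 1) 0] &
      (* compatibility with the distributivity constraints *)
      (forall x y z,
          (Ft x y + Ft x z) + Fb (x * y) (x * z) + Fm (x * (y + z)) 0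
          = 0 + tens' (Fo x) 0 (Fo (y + z)) (Fb y z) + Ft x (y + z)) /\
      (forall x y z,
          (Ft x z + Ft y z) + Fb (x * z) (y * z) + Fm ((x + y) * z) 0
          = 0 + tens' (Fo (x + y)) (Fb x y) (Fo z) 0 + Ft (x + y) z)].

Definition is_single (Fo : D -> D') (Fb Ft : D -> D -> B') : Prop :=
  [/\ Fo 0 = 0, Fo 1 = 1,
      exists u, forall x y, Fb x y = u &
      exists v, forall x y, Ft x y = v].
End Morph.

From mathcomp Require Import all_boot all_order all_algebra.
Import GRing.Theory.
Local Open Scope ring_scope.
Set Implicit Arguments.
Unset Strict Implicit.

(* Since F(0) = 0' and F(1) = 1', the constant labels u of breve F and v of
   tilde F satisfy d' u = d' v = 0; the object parts of the naturality squares
   then say that f0 is a unital ring homomorphism.  Cancelling the constant u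
   (resp. v) in the morphism parts of the naturality squares shows that the
   label of F(x --b--> _) does not depend on the source x, is additive in b,
   and transports the tensor label b c + b theta_y + theta_x c of A_{B->D}
   to the corresponding label of A_{B'->D'}.  Specializing the tensor
   identity to x = y = 0, to b = 0 and y = 0, and to x = 0 and c = 0 gives
   multiplicativity of f1 and compatibility with both actions; this uses
   that multiplication and the actions of an E-system vanish on 0.
   The file first collects these vanishing facts for E-systems, then the
   properties of single Ann-functors, and finally assembles the theorem. *)

Lemma additive_at0 (V W : zmodType) (f : V -> W) :
  (forall a b, f (a + b) = f a + f b) -> f 0 = 0.
Proof. by move=> fD; apply: (@addrI _ (f 0)); rewrite -fD !addr0. Qed.

Section TensorLabels.
Variables (B : zmodType) (m : B -> B -> B) (D : pzRingType)
          (thl thr : D -> B -> B).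
Hypotheses (m_rng : is_rng m) (theta_hom : theta_ringhom m thl thr).

Lemma theta0l (b : B) : thl 0 b = 0 /\ thr 0 b = 0.
Proof.
case: theta_hom => _ [thlD thrD] _ _ _.
by split; apply: (@additive_at0 _ _ (fun x => _ x b)).
Qed.

Lemma theta0r (x : D) : thl x 0 = 0 /\ thr x 0 = 0.
Proof.
by case: theta_hom => /(_ x) [thlD thrD _ _ _] _ _ _ _; split; apply: additive_at0.
Qed.

Lemma rng_mul0 (b : B) : m 0 b = 0 /\ m b 0 = 0.
Proof.
case: m_rng => _ mDl mDr.
by split; [apply: (@additive_at0 _ _ (m^~ b)) | apply: additive_at0].
Qed.

Lemma tens_mul (b c : B) : tens m thl thr 0 b 0 c = m b c.
Proof. by rewrite /tens (theta0l b).2 (theta0l c).1 !addr0. Qed.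

Lemma tens_thl (x : D) (c : B) : tens m thl thr x 0 0 c = thl x c.
Proof. by rewrite /tens (rng_mul0 c).1 (theta0r 0).2 !add0r. Qed.

Lemma tens_thr (y : D) (b : B) : tens m thl thr 0 b y 0 = thr y b.
Proof. by rewrite /tens (rng_mul0 b).2 (theta0r 0).1 addr0 add0r. Qed.
End TensorLabels.

Section SingleAnnFunctor.
Variables (B : zmodType) (m : B -> B -> B) (D : pzRingType) (d : B -> D)
          (thl thr : D -> B -> B).
Variables (B' : zmodType) (m' : B' -> B' -> B') (D' : pzRingType)
          (d' : B' -> D') (thl' thr' : D' -> B' -> B').
Variables (Fo : D -> D') (Fm : D -> B -> B') (Fb Ft : D -> D -> B').
Hypotheses (F_ann : is_AnnFunctor m d thl thr m' d' thl' thr' Fo Fm Fb Ft)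
           (F_single : is_single Fo Fb Ft).

(* The constant label of breve F has trivial boundary, so F is additive
   on objects. *)
Lemma single_Fo_add (x y : D) : Fo (x + y) = Fo x + Fo y.
Proof.
case: F_ann => _ [FbO _ _ _ _] _ _; case: F_single => Fo0 _ [u Fbu] _.
have du : d' u = 0 by have := FbO 0 0; rewrite addr0 Fbu Fo0 !addr0 => /esym.
by rewrite FbO Fbu du add0r.
Qed.

(* Likewise for tilde F, using F(1) = 1': F is multiplicative on objects. *)
Lemma single_Fo_mul (x y : D) : Fo (x * y) = Fo x * Fo y.
Proof.
case: F_ann => _ _ [FtO _ _ _] _; case: F_single => _ Fo1 _ [v Ftv].
have dv : d' v = 0.
  have := FtO 1 1; rewrite mul1r Ftv Fo1 mul1r => h.
  by apply/esym/(@addIr _ 1); rewrite add0r {1}h.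
by rewrite FtO Ftv dv add0r.
Qed.

(* Naturality of breve F with a constant label: F is additive on morphisms,
   jointly in source and label. *)
Lemma single_Fm_add (x y : D) (b c : B) :
  Fm (x + y) (b + c) = Fm x b + Fm y c.
Proof.
case: F_ann => _ [_ FbN _ _ _] _ _; case: F_single => _ _ [u Fbu] _.
by have := FbN x y b c; rewrite !Fbu addrC => /addIr.
Qed.

Lemma single_Fm_src (x : D) (c : B) : Fm x c = Fm 0 c.
Proof.
case: F_ann => [[_ Fm0 _] _ _ _].
by have := single_Fm_add x 0 0 c; rewrite addr0 add0r Fm0 add0r.
Qed.

(* Naturality of tilde F with a constant label: F transports tensor labels. *)
Lemma single_Fm_tens (x y : D) (b c : B) :
  Fm 0 (tens m thl thr x b y c)
  = tens m' thl' thr' (Fo x) (Fm 0 b) (Fo y) (Fm 0 c).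
Proof.
case: F_ann => _ _ [_ FtN _ _] _; case: F_single => _ _ _ [v Ftv].
have := FtN x y b c; rewrite !Ftv addrC !(single_Fm_src (_ * _)).
by rewrite (single_Fm_src x) (single_Fm_src y) => /addIr.
Qed.

Lemma single_Fo_d (b : B) : Fo (d b) = d' (Fm 0 b).
Proof.
case: F_ann => [[Fod _ _] _ _ _]; case: F_single => Fo0 _ _ _.
by have := Fod 0 b; rewrite !addr0 Fo0 addr0.
Qed.
End SingleAnnFunctor.

Theorem mainTheorem4
  (B : zmodType) (m : B -> B -> B) (D : pzRingType) (d : B -> D)
  (thl thr : D -> B -> B)
  (B' : zmodType) (m' : B' -> B' -> B') (D' : pzRingType) (d' : B' -> D')
  (thl' thr' : D' -> B' -> B')
  (Fo : D -> D') (Fm : D -> B -> B') (Fb Ft : D -> D -> B') :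
  is_Esystem m d thl thr ->
  is_Esystem m' d' thl' thr' ->
  is_AnnFunctor m d thl thr m' d' thl' thr' Fo Fm Fb Ft ->
  is_single Fo Fb Ft ->
  is_Emorph m d thl thr m' d' thl' thr' (fun b => Fm 0 b) Fo.
Proof.
move=> [rng _ th _ _] [rng' _ th' _ _] F_ann F_single.
have Fm_tens := single_Fm_tens F_ann F_single.
have Fm0 : forall x, Fm x 0 = 0 by case: F_ann => [[]].
have [Fo0 Fo1 _ _] := F_single.
split.
- split=> b c; first by rewrite -[0 in LHS]addr0 (single_Fm_add F_ann F_single).
  by have := Fm_tens 0 0 b c; rewrite Fo0 (tens_mul th) (tens_mul th').
- split=> // x y.
    exact: (single_Fo_add F_ann F_single x y).
  exact: (single_Fo_mul F_ann F_single x y).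
- exact: single_Fo_d F_ann F_single.
- move=> x c; have := Fm_tens x 0 0 c.
  by rewrite Fo0 (tens_thl rng th) Fm0 (tens_thl rng' th').
- move=> y b; have := Fm_tens 0 y b 0.
  by rewrite Fo0 (tens_thr rng th) Fm0 (tens_thr rng' th').
Qed.
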